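(* In the model described in the context, suppose $\triangle C>0$, and let $X(0)$ be the set of symmetric Stackelberg equilibria. Let $\zeta_1=(M+1)\triangle C+\min\big(MN\triangle C,\ MNk+2M\sqrt{Nk\triangle C}\big)$. Then there exists $x\in X(0)$ with $y_j(\mathbf0,x\mathbf1)=0$ if and only if $\alpha_x\le\zeta_1$. Furthermore, such an $x$ is given by \[x=\begin{cases}\frac1{M+1}\alpha_x,&\text{if }0\le\alpha_x<(M+1)\triangle C,\\ \frac1M(\alpha_x-\triangle C),&\text{if }(M+1)\triangle C\le\alpha_x\le\zeta_1.\end{cases}\]
   Context: Model: $M\ge1$ leaders and $N\ge2$ followers; inverse demand $P(q)=\alpha-\beta q$, $\alpha,\beta>0$; leader marginal cost $C$, follower marginal cost $c$, $c\ge C>0$; follower capacity $k>0$. Leader $i$ produces $x_i\ge0$; follower $j$ has forward position $f_j\in\mathbb{R}$ and chooses spot production $y_j\in[0,k]$. Given $\mathbf f,\mathbf x$, the spot market is the game among followers where follower $j$ chooses $y_j\in[0,k]$ to maximize $P(\sum_ix_i+\sum_{j'}y_{j'})(y_j-f_j)-cy_j$; its unique Nash equilibrium is $\mathbf y(\mathbf f,\mathbf x)=(y_1(\mathbf f,\mathbf x),\dots,y_N(\mathbf f,\mathbf x))$. Leader $i$'s payoff is $\psi_i=(P(\sum_ix_i+\sum_{j'}y_{j'}(\mathbf f,\mathbf x))-C)x_i$; $\psi_i(\bar x;x\mathbf1,\mathbf f)$ denotes this payoff when leader $i$ produces $\bar x$ and all other leaders produce $x$. $X(0)=\{x\in\mathbb{R}_+:\psi_i(x;x\mathbf1,\mathbf0)\ge\psi_i(\bar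 x;x\mathbf1,\mathbf0)\ \forall\bar x\in\mathbb{R}_+,\ \forall i\}$. $\alpha_x=(\alpha-C)/\beta$, $\triangle C=(c-C)/\beta$. *)

From HB Require Import structures.
From mathcomp Require Import all_boot all_order all_algebra.
Set Implicit Arguments. Unset Strict Implicit. Unset Printing Implicit Defensive.
Import Order.TTheory GRing.Theory Num.Theory.
Local Open Scope ring_scope.

Definition cst (R : rcfType) (n : nat) (x : R) : 'I_n -> R := fun _ => x.
Arguments cst {R} n x.

Section Model.
Variable R : rcfType.

Definition price (alpha beta q : R) : R := alpha - beta * q.

Definition total (M N : nat) (x : 'I_M -> R) (y : 'I_N -> R) : R :=
  \sum_(i < M) x i + \sum_(j < N) y j.

Definition upd (n : nat) (v : 'I_n -> R) (j : 'I_n) (z : R) : 'I_n -> R :=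
  fun j' => if j' == j then z else v j'.

Definition follower_payoff (alpha beta c : R) (M N : nat) (f : 'I_N -> R)
    (x : 'I_M -> R) (y : 'I_N -> R) (j : 'I_N) : R :=
  price alpha beta (total x y) * (y j - f j) - c * y j.

Definition spot_NE (alpha beta c k : R) (M N : nat) (f : 'I_N -> R)
    (x : 'I_M -> R) (y : 'I_N -> R) : Prop :=
  (forall j, 0 <= y j <= k) /\
  (forall j (z : R), 0 <= z <= k ->
     follower_payoff alpha beta c f x (upd y j z) j
       <= follower_payoff alpha beta c f x y j).


Definition leader_payoff (alpha beta C : R) (M N : nat)
    (ysol : ('I_N -> R) -> ('I_M -> R) -> ('I_N -> R))
    (f : 'I_N -> R) (x : 'I_M -> R) (i : 'I_M) : R :=
  (price alpha beta (total x (ysol f x)) - C) * x i.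

(* x \in X(0): symmetric Stackelberg equilibria with zero forward positions *)
Definition inX0 (alpha beta C : R) (M N : nat)
    (ysol : ('I_N -> R) -> ('I_M -> R) -> ('I_N -> R)) (x : R) : Prop :=
  0 <= x /\
  forall (xbar : R) (i : 'I_M), 0 <= xbar ->
    leader_payoff alpha beta C ysol (cst N 0) (upd (cst M x) i xbar) i
      <= leader_payoff alpha beta C ysol (cst N 0) (cst M x) i.

End Model.

From Pilot Require Import Defs.
From HB Require Import structures.
From mathcomp Require Import all_boot all_order all_algebra.
From mathcomp Require Import ring lra.
Import Order.TTheory GRing.Theory Num.Theory.
Set Implicit Arguments. Unset Strict Implicit. Unset Printing Implicit Defensive.
Local Open Scope ring_scope.

(* With no forward positions, follower j earns (P - c) y_j, so its spot output is the
   projection onto [0, k] of the margin T = (P - c) / beta; hence T is the unique root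
   of T + N clamp_k(T) = (alpha - c) / beta - (leaders' output), and a leader producing
   z earns beta (T + dC) z.  The followers stay out iff the leaders alone push T to 0.
   If 0 <= alpha_x < (M + 1) dC, the Cournot output alpha_x / (M + 1) already gives
   T < 0 (and x = 0 works when alpha_x < 0).
   Otherwise an equilibrium with inactive followers must sit on the kink T = 0, i.e.
   x = (alpha_x - dC) / M, and it is one iff no deviation letting the followers in pays:
   on the piece 0 < T <= k this is x <= (N + 1) dC, on the capacity piece T > k it is
   x <= dC + N k + 2 sqrt(N k dC) (a quadratic in T with discriminant condition);
   multiplying by M gives zeta1. *)

Section Clamp.
Variable R : realFieldType.
Implicit Types k T y z : R.

Definition clamp k T : R := Num.min (Num.max T 0) k.

Lemma clamp_le0 k T : 0 <= k -> T <= 0 -> clamp k T = 0.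
Proof. by move=> k0 T0; rewrite /clamp max_r // min_l. Qed.

Lemma clamp_id k T : 0 <= T <= k -> clamp k T = T.
Proof. by case/andP=> T0 Tk; rewrite /clamp max_l // min_l. Qed.

Lemma clamp_ge k T : 0 <= k -> k <= T -> clamp k T = k.
Proof. by move=> k0 kT; rewrite /clamp max_l ?min_r //; apply: le_trans kT. Qed.

Lemma clamp_ge0 k T : 0 <= k -> 0 <= clamp k T.
Proof. by move=> k0; rewrite le_min le_max lexx orbT. Qed.

Lemma clamp_le k T : clamp k T <= k.
Proof. by rewrite ge_min lexx orbT. Qed.

Lemma clamp_eq0 k T : 0 < k -> (clamp k T == 0) = (T <= 0).
Proof.
move=> k0; case: (lerP T 0) => [T0|T0]; first by rewrite clamp_le0 ?eqxx // ltW.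
by rewrite /clamp max_l ?ltW // gt_eqF // lt_min T0.
Qed.

Lemma clamp_homo k : {homo clamp k : T1 T2 / T1 <= T2}.
Proof. by move=> T1 T2 le12; rewrite le_min2 // le_max2. Qed.

Lemma clamp_proj k T y : 0 <= y <= k -> 0 <= (clamp k T - y) * (T - clamp k T).
Proof.
case/andP=> y0 yk; have k0 : 0 <= k by apply: le_trans yk.
case: (lerP T 0) => [T0|T0]; first by rewrite clamp_le0 //; nra.
case: (lerP k T) => [kT|Tk]; first by rewrite clamp_ge //; nra.
by rewrite clamp_id ?subrr ?mulr0 // (ltW T0) (ltW Tk).
Qed.

Lemma clamp_unique k T y : 0 <= y <= k ->
  (forall z, 0 <= z <= k -> (z - y) * (T - z) <= 0) -> y = clamp k T.
Proof.
move=> hy opt; set p := clamp k T.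
have k0 : 0 <= k by case/andP: hy => y0 yk; apply: le_trans yk.
have hp : 0 <= p <= k by rewrite clamp_ge0 ?clamp_le.
have proj : 0 <= (p - y) * (T - p) by apply: clamp_proj.
(* Test the midpoint of [y] and [p]: the gain there is at least [(p - y)^2 / 4]. *)
have mid : 0 <= (y + p) / 2 <= k.
  by case/andP: hy => ? ?; case/andP: hp => ? ?; apply/andP; split; lra.
have gain : ((y + p) / 2 - y) * (T - (y + p) / 2)
            = (p - y) * (T - p) / 2 + (p - y) ^+ 2 / 4 by field.
have sq0 : (p - y) ^+ 2 = 0.
  by apply/eqP; rewrite eq_le sqr_ge0 andbT; have := opt _ mid; lra.
by apply/eqP; rewrite eq_sym -subr_eq0 -sqrf_eq0 sq0.
Qed.

End Clamp.

Section Clearing.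
Variables (R : realFieldType) (n k : R).
Hypotheses (hn : 0 <= n) (hk : 0 <= k).

(* Market clearing for [n] followers of capacity [k] at margin [T]: the left-hand side
   of [clearing n k T = (alpha - c) / beta - (leaders' output)]. *)
Definition clearing (T : R) : R := T + n * clamp k T.

Lemma clearing_le0 T : T <= 0 -> clearing T = T.
Proof. by move=> T0; rewrite /clearing clamp_le0 // mulr0 addr0. Qed.

Lemma clearing_id T : 0 <= T <= k -> clearing T = (n + 1) * T.
Proof. by move=> hT; rewrite /clearing clamp_id //; ring. Qed.

Lemma clearing_ge T : k <= T -> clearing T = T + n * k.
Proof. by move=> kT; rewrite /clearing clamp_ge. Qed.

Lemma le_clearing T : T <= clearing T.
Proof. by rewrite /clearing lerDl mulr_ge0 ?clamp_ge0. Qed.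

Lemma clearing_inj : injective clearing.
Proof.
have mono T1 T2 : T1 < T2 -> clearing T1 < clearing T2.
  by move=> lt12; rewrite /clearing ltr_leD // ler_wpM2l // clamp_homo // ltW.
move=> T1 T2 e; apply/eqP; rewrite eq_le !leNgt.
by apply/andP; split; apply/negP => /mono; rewrite e ltxx.
Qed.

Lemma clearing_le0E T : (clearing T <= 0) = (T <= 0).
Proof.
apply/idP/idP => [|/clearing_le0 -> //]; exact: le_trans (le_clearing T).
Qed.

End Clearing.

(* [x] is a best response of a leader who leaves [s] to be absorbed by itself and the
   followers: producing [z] sets the margin [T] with [clearing n k T = s - z] and earns
   [(T + D) z] (up to the factor beta).  Both margins are quantified universally;
   [clearing_inj] makes this equivalent to evaluating them. *)
Definition best_response (R : realFieldType) (n k D s x : R) : Prop :=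
  forall z T T0, 0 <= z -> clearing n k T = s - z -> clearing n k T0 = s - x ->
  (T + D) * z <= (T0 + D) * x.

Lemma best_response0 (R : realFieldType) (n k D s : R) :
  0 <= n -> 0 <= k -> s + D <= 0 -> best_response n k D s 0.
Proof.
move=> hn hk sD z T T0 z0 hT _; rewrite mulr0.
have := le_clearing hn hk T; rewrite hT => Tz.
have TD : 0 <= - (T + D) by lra.
have := mulr_ge0 TD z0; lra.
Qed.

Lemma best_response_interior (R : realFieldType) (n k D x : R) :
  0 <= n -> 0 <= k -> 0 <= x <= D -> best_response n k D (2 * x - D) x.
Proof.
move=> hn hk /andP[x0 xD] z T T0 z0 hT hT0.
have T0E : T0 = x - D.
  have T0le : T0 <= 0 by rewrite -(clearing_le0E hn hk) hT0; lra.
  by rewrite -(clearing_le0 n hk T0le) hT0; ring.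
have := le_clearing hn hk T; rewrite hT T0E => Tz.
have : (T + D) * z <= (2 * x - z) * z by apply: ler_wpM2r; lra.
have := sqr_ge0 (x - z).
lra.
Qed.

Lemma best_response_boundary (R : rcfType) (n k D x : R) :
  0 <= n -> 0 < k -> 0 < D -> D <= x <= (n + 1) * D ->
  x <= D + n * k + 2 * Num.sqrt (n * k * D) -> best_response n k D x x.
Proof.
move=> hn hk hD /andP[Dx xn]; set r := Num.sqrt _ => xr z T T0 z0 hT hT0.
have -> : T0 = 0.
  by apply: (clearing_inj (k := k) hn); rewrite hT0 subrr clearing_le0 // ltW.
have r0 : 0 <= r by apply: sqrtr_ge0.
have r2 : r ^+ 2 = n * k * D by rewrite sqr_sqrtr // !mulr_ge0 // ltW.
case: (lerP T 0) => [Tneg|Tpos].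
  rewrite clearing_le0 ?(ltW hk) // in hT.
  have -> : z = x - T by lra.
  have : 0 <= (- T) * (x - D - T) by apply: mulr_ge0; lra.
  lra.
case: (lerP k T) => [kT|Tk].
  rewrite clearing_ge ?(ltW hk) // in hT.
  have -> : z = x - T - n * k by lra.
  have := sqr_ge0 (T - r).
  have : 0 <= T * (2 * r - (x - D - n * k)) by apply: mulr_ge0; lra.
  lra.
rewrite clearing_id in hT; last by rewrite !ltW.
have -> : z = x - (n + 1) * T by lra.
have nT : 0 <= (n + 1) * T by apply: mulr_ge0; lra.
have : 0 <= T * ((n + 1) * (T + D) - x) by apply: mulr_ge0; rewrite ?mulrDr; lra.
lra.
Qed.

Lemma best_response_no_slack (R : realFieldType) (n k D s x : R) :
  0 <= k -> 0 < D -> D < x -> s <= x -> best_response n k D s x -> s = x.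
Proof.
move=> hk hD Dx sx br.
case: (lerP x s) => [xs|sx']; first by apply/eqP; rewrite eq_le sx xs.
(* Cutting output to [max s D] keeps the followers out and raises profit. *)
set z := Num.max s D.
have zs : s <= z by rewrite le_max lexx.
have zD : D <= z by rewrite le_max lexx orbT.
have zx : z < x by rewrite gt_max sx' Dx.
clearbody z.
have z0 : 0 <= z by lra.
have e1 : clearing n k (s - z) = s - z by apply: clearing_le0 => //; lra.
have e2 : clearing n k (s - x) = s - x by apply: clearing_le0 => //; lra.
have := br z _ _ z0 e1 e2.
have : 0 < (x - z) * (x + z - s - D) by apply: mulr_gt0; lra.
lra.
Qed.

Lemma best_response_le (R : realFieldType) (n k D x : R) :
  0 <= n -> 0 < k -> 0 < D -> best_response n k D x x -> x <= (n + 1) * D.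
Proof.
move=> hn hk hD br; case: (lerP x ((n + 1) * D)) => // xn; exfalso.
(* Let the followers in with a small margin [t]: the profit changes by
   [t (x - (n + 1) t - (n + 1) D) > 0]. *)
set t := Num.min k ((x - (n + 1) * D) / (2 * (n + 1))).
have t0 : 0 < t by rewrite lt_min hk divr_gt0 //; lra.
have tk : t <= k by rewrite ge_min lexx.
have te : 2 * (n + 1) * t <= x - (n + 1) * D.
  rewrite mulrC -ler_pdivlMr; last lra.
  by rewrite ge_min lexx orbT.
have nt : 0 < (n + 1) * t by apply: mulr_gt0; lra.
have nD : 0 <= (n + 1) * D by apply: mulr_ge0; lra.
have z0 : 0 <= x - (n + 1) * t by lra.
have e1 : clearing n k t = x - (x - (n + 1) * t).
  by rewrite clearing_id ?(ltW t0) ?tk //; ring.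
have e0 : clearing n k 0 = x - x by rewrite clearing_le0 ?subrr // ltW.
have := br _ _ _ z0 e1 e0.
have : 0 < t * (x - (n + 1) * t - (n + 1) * D) by apply: mulr_gt0; lra.
lra.
Qed.

Lemma best_response_le_sqrt (R : rcfType) (n k D x : R) :
  1 <= n -> 0 < k -> 0 < D -> x <= (n + 1) * D ->
  best_response n k D x x -> x <= D + n * k + 2 * Num.sqrt (n * k * D).
Proof.
move=> n1 hk hD xn br; set r := Num.sqrt _.
case: (lerP x (D + n * k + 2 * r)) => // xr; exfalso.
have r0 : 0 <= r by apply: sqrtr_ge0.
have r2 : r ^+ 2 = n * k * D by rewrite sqr_sqrtr // !mulr_ge0 //; lra.
have kD : k < D by rewrite -(ltr_pM2l (x := n)); lra.
have kr : k < r.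
  rewrite -(ltr_pXn2r (n := 2)) ?nnegrE ?(ltW hk) // r2.
  have kkD : k * k < k * D by rewrite ltr_pM2l.
  have : k * D <= n * (k * D) by rewrite ler_peMl // mulr_ge0 // ltW.
  rewrite expr2 mulrA; lra.
(* The deviation giving margin [r > k] changes the profit by [r (x - D - n k - 2 r)]. *)
have z0 : 0 <= x - r - n * k by lra.
have e1 : clearing n k r = x - (x - r - n * k).
  by rewrite clearing_ge ?(ltW kr) ?(ltW hk) //; ring.
have e0 : clearing n k 0 = x - x by rewrite clearing_le0 ?subrr // ltW.
have := br _ _ _ z0 e1 e0.
have : 0 < r * ((x - D - n * k) - 2 * r) by apply: mulr_gt0; lra.
lra.
Qed.

(* Symmetric output [x] of [m] leaders at which the followers are inactive, with
   [A] = alpha_x and [D] = dC, so that [A - D] = (alpha - c) / beta. *)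
Definition leader_equilibrium (R : realFieldType) (m n k D A x : R) : Prop :=
  [/\ 0 <= x, A - D <= m * x & best_response n k D (A - D - (m - 1) * x) x].

Definition threshold (R : rcfType) (m n k D : R) : R :=
  (m + 1) * D + Num.min (m * n * D) (m * n * k + 2 * m * Num.sqrt (n * k * D)).

Lemma leader_equilibrium0 (R : realFieldType) (m n k D A : R) :
  0 <= n -> 0 <= k -> 0 <= D -> A <= 0 -> leader_equilibrium m n k D A 0.
Proof.
move=> hn hk hD A0; split; rewrite ?mulr0 ?subr0 //; first lra.
by apply: best_response0 => //; lra.
Qed.

Lemma leader_equilibrium_interior (R : realFieldType) (m n k D A : R) :
  0 <= m -> 0 <= n -> 0 <= k -> 0 <= A < (m + 1) * D ->
  leader_equilibrium m n k D A (A / (m + 1)).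
Proof.
move=> hm hn hk /andP[A0 AD]; set x := A / (m + 1).
have eA : A = (m + 1) * x by rewrite /x; field; lra.
have x0 : 0 <= x by rewrite divr_ge0 //; lra.
have xD : x <= D by rewrite -(ler_pM2l (x := m + 1)); lra.
split => //; first lra.
have -> : A - D - (m - 1) * x = 2 * x - D by rewrite eA; ring.
by apply: best_response_interior => //; rewrite x0.
Qed.

Lemma leader_equilibrium_boundary (R : rcfType) (m n k D A : R) :
  0 < m -> 0 <= n -> 0 < k -> 0 < D -> (m + 1) * D <= A <= threshold m n k D ->
  leader_equilibrium m n k D A ((A - D) / m).
Proof.
move=> hm hn hk hD /andP[DA Ath]; set x := (A - D) / m.
have eA : A = m * x + D by rewrite /x; field; lra.
have [le_n le_sqrt] : A <= (m + 1) * D + m * n * D /\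
    A <= (m + 1) * D + (m * n * k + 2 * m * Num.sqrt (n * k * D)).
  by split; apply: (le_trans Ath); rewrite lerD2l ge_min lexx ?orbT.
have xD : D <= x by rewrite -(ler_pM2l hm); lra.
split; [lra | lra |].
have -> : A - D - (m - 1) * x = x by rewrite eA; ring.
apply: best_response_boundary => //; first (apply/andP; split) => //.
  by rewrite -(ler_pM2l hm); lra.
by rewrite -(ler_pM2l hm); lra.
Qed.

Lemma threshold_ge (R : rcfType) (m n k D : R) :
  0 <= m -> 0 <= n -> 0 <= k -> 0 <= D -> (m + 1) * D <= threshold m n k D.
Proof.
move=> hm hn hk hD; rewrite /threshold lerDl le_min !mulr_ge0 //=.
by rewrite addr_ge0 ?mulr_ge0 ?sqrtr_ge0.
Qed.

Lemma leader_equilibrium_le_threshold (R : rcfType) (m n k D A x : R) :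
  0 < m -> 1 <= n -> 0 < k -> 0 < D ->
  leader_equilibrium m n k D A x -> A <= threshold m n k D.
Proof.
move=> hm n1 hk hD [x0 Ax br].
case: (lerP A ((m + 1) * D)) => [AD|DA].
  by apply: le_trans AD (threshold_ge _ _ _ _); lra.
have xD : D < x by rewrite -(ltr_pM2l hm); lra.
have sx : A - D - (m - 1) * x = x.
  by apply: (best_response_no_slack (ltW hk) hD xD _ br); lra.
rewrite sx in br.
have eA : A = m * x + D by lra.
have xn := best_response_le (ltW (lt_le_trans ltr01 n1)) hk hD br.
have xr := best_response_le_sqrt n1 hk hD xn br.
rewrite /threshold eA.
suff : m * x - m * D <= Num.min (m * n * D) (m * n * k + 2 * m * Num.sqrt (n * k * D)).
  lra.
rewrite le_min; apply/andP; split.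
  by have := ler_wpM2l (ltW hm) xn; lra.
by have := ler_wpM2l (ltW hm) xr; lra.
Qed.

Lemma exists_leader_equilibrium (R : rcfType) (m n k D A : R) :
  0 < m -> 1 <= n -> 0 < k -> 0 < D ->
  (exists x, leader_equilibrium m n k D A x) <-> A <= threshold m n k D.
Proof.
move=> hm n1 hk hD; have hn : 0 <= n by lra.
split=> [[x]|Ath]; first exact: leader_equilibrium_le_threshold.
case: (lerP A 0) => [A0|A0]; first by exists 0; apply: leader_equilibrium0 => //; lra.
case: (lerP ((m + 1) * D) A) => [DA|AD].
  by exists ((A - D) / m); apply: leader_equilibrium_boundary => //; rewrite DA.
exists (A / (m + 1)); apply: leader_equilibrium_interior; rewrite ?AD ?ltW //; lra.
Qed.

Lemma sum_upd (R : rcfType) (n : nat) (v : 'I_n -> R) j z :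
  \sum_(i < n) upd v j z i = \sum_(i < n) v i - v j + z.
Proof.
rewrite (bigD1 j) //= [in RHS](bigD1 j) //= /upd eqxx.
rewrite (eq_bigr v); last by move=> i /negbTE ->.
by ring.
Qed.

Lemma sum_cst (R : rcfType) (n : nat) (v : R) : \sum_(i < n) cst n v i = n%:R * v.
Proof. by rewrite sumr_const card_ord mulr_natl. Qed.

Section SpotMarket.
Variables (R : rcfType) (alpha beta c k : R) (M N : nat).

Lemma follower_payoff_gain (x : 'I_M -> R) (y : 'I_N -> R) j z : beta != 0 ->
  follower_payoff alpha beta c (cst N 0) x (upd y j z) j
    - follower_payoff alpha beta c (cst N 0) x y j
  = beta * ((z - y j) * ((alpha - c) / beta - Defs.total x y - z)).
Proof.
move=> b0; rewrite /follower_payoff /Defs.total sum_upd /upd eqxx /cst /price.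
by field.
Qed.

Lemma spot_NE_clamp (x : 'I_M -> R) y j : 0 < beta ->
  spot_NE alpha beta c k (cst N 0) x y ->
  y j = clamp k ((alpha - c) / beta - Defs.total x y).
Proof.
move=> b0 [hy hne]; apply: clamp_unique (hy j) _ => z hz.
have := hne j z hz; rewrite -subr_le0 follower_payoff_gain ?gt_eqF //.
by rewrite pmulr_rle0.
Qed.

Lemma spot_NE_clearing (x : 'I_M -> R) y : 0 < beta ->
  spot_NE alpha beta c k (cst N 0) x y ->
  clearing N%:R k ((alpha - c) / beta - Defs.total x y)
  = (alpha - c) / beta - \sum_(i < M) x i.
Proof.
move=> b0 hNE; set T := _ - Defs.total x y.
have hy : \sum_j y j = N%:R * clamp k T.
  rewrite (eq_bigr (fun=> clamp k T)); last by move=> j _; exact: spot_NE_clamp.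
  by rewrite sumr_const card_ord mulr_natl.
by rewrite /clearing {1}/T /Defs.total hy; ring.
Qed.

End SpotMarket.

Section Leaders.
Variables (R : rcfType) (alpha beta C c k : R) (M N : nat).
Variable ysol : ('I_N -> R) -> ('I_M -> R) -> ('I_N -> R).

Lemma inX0_best_response (i0 : 'I_M) x : 0 < beta ->
  (forall f x, spot_NE alpha beta c k f x (ysol f x)) ->
  inX0 alpha beta C ysol x <->
  0 <= x /\
  best_response N%:R k ((c - C) / beta) ((alpha - c) / beta - (M%:R - 1) * x) x.
Proof.
move=> hb hysol; set a := (alpha - c) / beta; set D := (c - C) / beta.
pose T xv := a - Defs.total xv (ysol (cst N 0) xv).
have hT xv : clearing N%:R k (T xv) = a - \sum_(i < M) xv i.
  exact: spot_NE_clearing hb (hysol _ _).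
have payoff xv i :
    leader_payoff alpha beta C ysol (cst N 0) xv i = beta * ((T xv + D) * xv i).
  by rewrite /leader_payoff /price /T /a /D; field; rewrite gt_eqF.
have dev z i : a - \sum_(j < M) upd (cst M x) i z j = a - (M%:R - 1) * x - z.
  by rewrite sum_upd sum_cst /cst; ring.
have sym : a - \sum_(j < M) cst M x j = a - (M%:R - 1) * x - x.
  by rewrite sum_cst; ring.
have upd_i z i : upd (cst M x) i z i = z by rewrite /upd eqxx.
split=> [[x0 hx]|[x0 br]].
  split=> // z T1 T0 z0 h1 h0.
  have -> : T1 = T (upd (cst M x) i0 z).
    by apply: (clearing_inj (k := k) (ler0n _ N)); rewrite h1 hT dev.
  have -> : T0 = T (cst M x).
    by apply: (clearing_inj (k := k) (ler0n _ N)); rewrite h0 hT sym.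
  by have := hx z i0 z0; rewrite !payoff upd_i ler_pM2l.
split=> // z i z0; rewrite !payoff ler_pM2l // upd_i.
by apply: br; rewrite ?hT ?dev ?sym.
Qed.

Lemma followers_inactive_iff (j0 : 'I_N) x : 0 < beta -> 0 < k ->
  (forall f x, spot_NE alpha beta c k f x (ysol f x)) ->
  (forall j, ysol (cst N 0) (cst M x) j = 0) <-> (alpha - c) / beta <= M%:R * x.
Proof.
move=> hb hk hysol.
set T := (alpha - c) / beta - Defs.total (cst M x) (ysol (cst N 0) (cst M x)).
have hy j : ysol (cst N 0) (cst M x) j = clamp k T by exact: spot_NE_clamp.
have hc : clearing N%:R k T = (alpha - c) / beta - M%:R * x.
  by rewrite spot_NE_clearing // sum_cst.
rewrite -subr_le0 -hc clearing_le0E ?ler0n ?(ltW hk) //.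
split=> [/(_ j0)|T0 j]; rewrite hy; first by move/eqP; rewrite clamp_eq0.
exact: clamp_le0 (ltW hk) T0.
Qed.

Lemma inX0_inactive_iff (i0 : 'I_M) (j0 : 'I_N) x : 0 < beta -> 0 < k ->
  (forall f x, spot_NE alpha beta c k f x (ysol f x)) ->
  (inX0 alpha beta C ysol x /\ forall j, ysol (cst N 0) (cst M x) j = 0) <->
  leader_equilibrium M%:R N%:R k ((c - C) / beta) ((alpha - C) / beta) x.
Proof.
move=> hb hk hysol; rewrite /leader_equilibrium.
have -> : (alpha - C) / beta - (c - C) / beta = (alpha - c) / beta.
  by rewrite -mulrBl opprB addrA subrK.
have X0 := inX0_best_response i0 x hb hysol.
have inactive := followers_inactive_iff j0 x hb hk hysol.
split=> [[/X0[x0 br] /inactive]|[x0 /inactive ? br]]; first by split.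
by split=> //; apply/X0.
Qed.

End Leaders.

Theorem lemma8 (R : rcfType) (M N : nat) (hM : (1 <= M)%N) (hN : (2 <= N)%N)
    (alpha beta C c k : R)
    (halpha : 0 < alpha) (hbeta : 0 < beta) (hC : 0 < C) (hcC : C <= c)
    (hk : 0 < k)
    (ysol : ('I_N -> R) -> ('I_M -> R) -> ('I_N -> R))
    (hysol : forall f x, spot_NE alpha beta c k f x (ysol f x))
    (hdC : 0 < (c - C) / beta) :
  let ax := (alpha - C) / beta in
  let dC := (c - C) / beta in
  let zeta1 := (M%:R + 1) * dC
      + Num.min (M%:R * N%:R * dC)
                (M%:R * N%:R * k + 2 * M%:R * Num.sqrt (N%:R * k * dC)) in
  ((exists x : R, inX0 alpha beta C ysol x /\
       forall j, ysol (cst N 0) (cst M x) j = 0) <-> ax <= zeta1) /\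
  (0 <= ax < (M%:R + 1) * dC ->
     let x := ax / (M%:R + 1) in
     inX0 alpha beta C ysol x /\ forall j, ysol (cst N 0) (cst M x) j = 0) /\
  ((M%:R + 1) * dC <= ax <= zeta1 ->
     let x := (ax - dC) / M%:R in
     inX0 alpha beta C ysol x /\ forall j, ysol (cst N 0) (cst M x) j = 0).
Proof.
move=> ax dC zeta1.
have hM0 : 0 < M%:R :> R by rewrite ltr0n.
have hN1 : 1 <= N%:R :> R by rewrite ler1n ltnW.
have equilibrium x :=
  inX0_inactive_iff C (Ordinal hM) (Ordinal (ltnW hN)) x hbeta hk hysol.
split; [|split].
- apply: (iff_trans _ (exists_leader_equilibrium ax hM0 hN1 hk hdC)).
  by split=> -[x /equilibrium hx]; exists x.
- move=> hax; apply/equilibrium; apply: leader_equilibrium_interior => //; lra.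
- move=> hax; apply/equilibrium; exact: leader_equilibrium_boundary.
Qed.
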